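(* (1) If $\alpha:P\to P_0$ is an incentive strategy of the leader and $u^\natural\in\mathcal{E}(\alpha)$, then $(\alpha[u^\natural],u^\natural)\in\mathcal{B}$. (2) If $u_0^\natural\in P_0$ and $u^\natural\in P$ satisfy $(u_0^\natural,u^\natural)\in\mathcal{B}$, then there exists an incentive strategy of the leader $\alpha:P\to P_0$ such that $\alpha[u^\natural]=u_0^\natural$ and $u^\natural\in\mathcal{E}(\alpha)$.
   Context: Static game with a leader (player $0$) and followers $1,\dots,n$. Each $P_i$ ($i=0,\dots,n$) is a nonempty compact metric space and each payoff $J_i:P_0\times P_1\times\dots\times P_n\to\mathbb{R}$ ($i=0,\dots,n$) is continuous; each player maximizes. Let $P=P_1\times\dots\times P_n$; elements $u=(u_1,\dots,u_n)\in P$ are profiles of followers' strategies, and for $u_i'\in P_i$, $(u_i',u_{-i})$ denotes $u$ with the $i$-th component replaced by $u_i'$. Write $J_i(u_0,u)=J_i(u_0,u_1,\dots,u_n)$. An incentive strategy of the leader is an arbitrary map $\alpha:P\to P_0$. The set of followers' Nash equilibria against $\alpha$ is $\mathcal{E}(\alpha)=\{u\in P: J_i(\alpha[u],u)\ge J_i(\alpha[(u_i',u_{-i})],(u_i',u_{-i}))\ \text{for all } i=1,\dots,n,\ u_i'\in P_i\}$. Define $\mathcal{B}=\{(u_0,u)\in P_0\times P: J_i(u_0,u)\ge\max_{u_i'\in P_i}\min_{u_0'\in P_0}J_i(u_0',u_i',u_{-i})\ \text{for } i=1,\dots,n\}$. *)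

From mathcomp Require Import all_boot.
From Stdlib Require Import Reals ClassicalEpsilon List.
Set Implicit Arguments. Unset Strict Implicit.
Open Scope R_scope.

Definition open_set (M : Metric_Space) (U : Base M -> Prop) : Prop :=
  forall x, U x -> exists r, r > 0 /\ forall y, dist M x y < r -> U y.

Definition compact_space (M : Metric_Space) : Prop :=
  forall (I : Type) (U : I -> Base M -> Prop),
    (forall i, open_set (U i)) ->
    (forall x, exists i, U i x) ->
    exists l : list I, forall x, exists i, In i l /\ U i x.

Definition nonempty_space (M : Metric_Space) : Prop := inhabited (Base M).

Definition profile (n : nat) (X : 'I_n -> Metric_Space) : Type :=
  forall i : 'I_n, Base (X i).

(* (v, u_{-i}) : u with the i-th component replaced by v. *)
Definition upd (n : nat) (X : 'I_n -> Metric_Space) (u : profile X)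
  (i : 'I_n) (v : Base (X i)) : profile X :=
  fun j => match @eqP _ i j with
           | ReflectT e => eq_rect i (fun k => Base (X k)) v j e
           | ReflectF _ => u j
           end.

Definition cont_payoff (n : nat) (X0 : Metric_Space) (X : 'I_n -> Metric_Space)
  (J : Base X0 -> profile X -> R) : Prop :=
  forall (x0 : Base X0) (x : profile X) (eps : R), eps > 0 ->
    exists delta, delta > 0 /\
      forall (y0 : Base X0) (y : profile X),
        dist X0 x0 y0 < delta -> (forall i, dist (X i) (x i) (y i) < delta) ->
        Rabs (J y0 y - J x0 x) < eps.

(* minimum / maximum values of a real function (chosen by epsilon; they
   exist under compactness + continuity). *)
Definition is_min_val (T : Type) (f : T -> R) (m : R) : Prop :=
  (exists x, f x = m) /\ forall x, m <= f x.
Definition is_max_val (T : Type) (f : T -> R) (m : R) : Prop :=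
  (exists x, f x = m) /\ forall x, f x <= m.
Definition min_val (T : Type) (f : T -> R) : R :=
  epsilon (inhabits 0) (is_min_val f).
Definition max_val (T : Type) (f : T -> R) : R :=
  epsilon (inhabits 0) (is_max_val f).

Definition Nash_set (n : nat) (X0 : Metric_Space) (X : 'I_n -> Metric_Space)
  (J : 'I_n -> Base X0 -> profile X -> R) (alpha : profile X -> Base X0)
  (u : profile X) : Prop :=
  forall (i : 'I_n) (v : Base (X i)),
    J i (alpha u) u >= J i (alpha (@upd n X u i v)) (@upd n X u i v).

Definition maxmin_val (n : nat) (X0 : Metric_Space) (X : 'I_n -> Metric_Space)
  (J : 'I_n -> Base X0 -> profile X -> R) (i : 'I_n) (u : profile X) : R :=
  max_val (fun v : Base (X i) => min_val (fun u0' : Base X0 => J i u0' (@upd n X u i v))).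

Definition B_set (n : nat) (X0 : Metric_Space) (X : 'I_n -> Metric_Space)
  (J : 'I_n -> Base X0 -> profile X -> R) (u0 : Base X0) (u : profile X) : Prop :=
  forall i : 'I_n, J i u0 u >= maxmin_val J i u.

From Pilot Require Import Defs.
From mathcomp Require Import all_boot.
From Stdlib Require Import Reals Lra List ClassicalEpsilon Classical FunctionalExtensionality.
Open Scope R_scope.
Set Implicit Arguments. Unset Strict Implicit.

(* (1) Deviating to a max-min strategy guarantees follower i his max-min
   value whatever the leader answers, so at a Nash equilibrium he gets at
   least that much.
   (2) Conversely, the leader answers u^natural with u_0^natural and punishes
   a unilateral deviation of follower i by a minimiser of J_i (the deviator
   is determined by the deviating profile). The deviator then gets at most
   his max-min value, which by membership in B is at most what he gets at
   u^natural. Compactness and continuity only serve to make min_val and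
   max_val true extrema. *)

Definition metric_continuous (M : Metric_Space) (f : Base M -> R) : Prop :=
  forall x eps, eps > 0 ->
    exists delta, delta > 0 /\ forall y, dist M x y < delta -> Rabs (f y - f x) < eps.

Definition upper_semicontinuous (M : Metric_Space) (f : Base M -> R) : Prop :=
  forall c, Defs.open_set (fun x => f x < c).

Lemma dist_self (M : Metric_Space) (x : Base M) : dist M x x = 0.
Proof. apply (proj2 (dist_refl M x x)); reflexivity. Qed.

Lemma continuous_usc (M : Metric_Space) (f : Base M -> R) :
  metric_continuous f -> upper_semicontinuous f.
Proof.
  intros hf c x Hx.
  destruct (hf x (c - f x)) as [d [Hd Hball]]; [lra|].
  exists d; split; [exact Hd|].
  intros y Hy. specialize (Hball y Hy). apply Rabs_def2 in Hball. lra.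
Qed.

Lemma continuous_opp (M : Metric_Space) (f : Base M -> R) :
  metric_continuous f -> metric_continuous (fun x => - f x).
Proof.
  intros hf x eps Heps.
  destruct (hf x eps Heps) as [d [Hd Hball]].
  exists d; split; [exact Hd|].
  intros y Hy. replace (- f y - - f x) with (- (f y - f x)) by ring.
  rewrite Rabs_Ropp. auto.
Qed.

Lemma In_argmax (A : Type) (f : A -> R) (l : list A) (a : A) :
  In a l -> exists y, In y l /\ forall z, In z l -> f z <= f y.
Proof.
  revert a; induction l as [|b l IH]; intros a Ha; [destruct Ha|].
  destruct l as [|c l'].
  - exists b; split; [left; auto|]. intros z [<-|[]]; lra.
  - destruct (IH c (or_introl Logic.eq_refl)) as [y [Hy Hmax]].
    destruct (Rle_dec (f b) (f y)).
    + exists y; split; [right; auto|]. intros z [<-|Hz]; auto.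
    + exists b; split; [left; auto|]. intros z [<-|Hz]; [lra|].
      specialize (Hmax z Hz); lra.
Qed.

(* If no maximum existed, the open sets [{f < f y}] would cover [M]; a finite
   subcover contradicts the largest value of [f] at its indices. *)
Lemma usc_attains_max (M : Metric_Space) (f : Base M -> R) :
  compact_space M -> nonempty_space M -> upper_semicontinuous f ->
  exists x, forall y, f y <= f x.
Proof.
  intros Hc [x0] Hf.
  apply NNPP; intro Hnomax.
  assert (Hcover : forall x, exists y, f x < f y).
  { intro x. apply NNPP; intro Hx. apply Hnomax. exists x. intro y.
    apply Rnot_lt_le; intro Hy. apply Hx; eauto. }
  destruct (Hc (Base M) (fun y x => f x < f y) (fun y => Hf (f y)) Hcover) as [l Hl].
  destruct (Hl x0) as [i0 [Hi0 _]].
  destruct (In_argmax f Hi0) as [y [Hy Hmax]].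
  destruct (Hl y) as [i [Hi Hfi]]. specialize (Hmax i Hi). lra.
Qed.

Lemma max_val_spec (M : Metric_Space) (f : Base M -> R) :
  compact_space M -> nonempty_space M -> upper_semicontinuous f ->
  is_max_val f (max_val f).
Proof.
  intros Hc Hn Hf. unfold max_val, min_val. apply epsilon_spec.
  destruct (usc_attains_max Hc Hn Hf) as [x Hx].
  exists (f x). split; eauto.
Qed.

Lemma min_val_spec (M : Metric_Space) (f : Base M -> R) :
  compact_space M -> nonempty_space M -> upper_semicontinuous (fun x => - f x) ->
  is_min_val f (min_val f).
Proof.
  intros Hc Hn Hf. unfold max_val, min_val. apply epsilon_spec.
  destruct (usc_attains_max Hc Hn Hf) as [x Hx].
  exists (f x). split; [eauto|]. intro y. specialize (Hx y). lra.
Qed.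

Lemma usc_attained_inf (A : Type) (M : Metric_Space) (F : A -> Base M -> R)
  (g : Base M -> R) :
  (forall a, upper_semicontinuous (F a)) ->
  (forall x, is_min_val (fun a => F a x) (g x)) ->
  upper_semicontinuous g.
Proof.
  intros HF Hg c x Hx.
  destruct (Hg x) as [[a Ha] _].
  destruct (HF a c x) as [r [Hr Hball]]; [lra|].
  exists r; split; [exact Hr|].
  intros y Hy. destruct (Hg y) as [_ Hle].
  specialize (Hle a). specialize (Hball y Hy). simpl in Hle. lra.
Qed.

Section Profiles.

Variables (n : nat) (X : 'I_n -> Metric_Space).

Definition agree_off (i : 'I_n) (w u : profile X) : Prop :=
  forall k, k <> i -> w k = u k.

Lemma upd_eq (u : profile X) (i : 'I_n) (v : Base (X i)) : @upd _ _ u i v i = v.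
Proof.
  unfold upd. destruct (@eqP _ i i) as [e|ne]; [|contradiction].
  rewrite (eq_irrelevance e erefl). reflexivity.
Qed.

Lemma upd_agree_off (u : profile X) (i : 'I_n) (v : Base (X i)) :
  agree_off i (@upd _ _ u i v) u.
Proof. intros k Hk. unfold upd. destruct (@eqP _ i k); [congruence|reflexivity]. Qed.

Lemma agree_off_unique (i j : 'I_n) (w u : profile X) :
  agree_off i w u -> agree_off j w u -> w <> u -> i = j.
Proof.
  intros Hi Hj Hne. apply NNPP; intro Hij. apply Hne.
  apply functional_extensionality_dep. intro k.
  destruct (classic (k = j)) as [->|Hkj]; auto.
Qed.

Variable X0 : Metric_Space.

Lemma cont_payoff_fst (F : Base X0 -> profile X -> R) (w : profile X) :
  cont_payoff F -> metric_continuous (fun x0 => F x0 w).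
Proof.
  intros hF x eps Heps.
  destruct (hF x w eps Heps) as [d [Hd Hball]].
  exists d; split; [exact Hd|].
  intros y Hy. apply Hball; [exact Hy|]. intro k. rewrite dist_self. lra.
Qed.

Lemma cont_payoff_upd (F : Base X0 -> profile X -> R) (x0 : Base X0)
  (u : profile X) (i : 'I_n) :
  cont_payoff F -> metric_continuous (fun v : Base (X i) => F x0 (@upd _ _ u i v)).
Proof.
  intros hF v eps Heps.
  destruct (hF x0 (@upd _ _ u i v) eps Heps) as [d [Hd Hball]].
  exists d; split; [exact Hd|].
  intros w Hw. apply Hball; [rewrite dist_self; lra|].
  intro k. destruct (classic (i = k)) as [<-|Hik].
  - rewrite !upd_eq. exact Hw.
  - rewrite !upd_agree_off; auto. rewrite dist_self. lra.
Qed.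

End Profiles.

Section Game.

Variables (n : nat) (X0 : Metric_Space) (X : 'I_n -> Metric_Space)
  (J : 'I_n -> Base X0 -> profile X -> R).
Hypotheses (hX0c : compact_space X0) (hX0n : nonempty_space X0)
  (hXc : forall i, compact_space (X i)) (hXn : forall i, nonempty_space (X i))
  (hJ : forall i, cont_payoff (J i)).

Lemma payoff_min_spec (i : 'I_n) (w : profile X) :
  is_min_val (fun x0 => J i x0 w) (min_val (fun x0 => J i x0 w)).
Proof.
  apply min_val_spec; auto.
  apply continuous_usc, continuous_opp, cont_payoff_fst, hJ.
Qed.

Lemma maxmin_val_spec (i : 'I_n) (u : profile X) :
  is_max_val (fun v : Base (X i) => min_val (fun x0 => J i x0 (@upd _ _ u i v)))
    (maxmin_val J i u).
Proof.
  apply max_val_spec; auto.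
  apply (usc_attained_inf (F := fun x0 v => J i x0 (@upd _ _ u i v))).
  - intro x0. apply continuous_usc, cont_payoff_upd, hJ.
  - intro v. apply payoff_min_spec.
Qed.

Lemma Nash_set_B_set (alpha : profile X -> Base X0) (u : profile X) :
  Nash_set J alpha u -> B_set J (alpha u) u.
Proof.
  intros HN i.
  destruct (maxmin_val_spec i u) as [[v Hv] _].
  destruct (payoff_min_spec i (@upd _ _ u i v)) as [_ Hmin].
  specialize (HN i v). specialize (Hmin (alpha (@upd _ _ u i v))). simpl in Hmin. lra.
Qed.

Definition incentive_response (u0 : Base X0) (u w : profile X) (x0 : Base X0) : Prop :=
  (w = u /\ x0 = u0) \/
  (exists j, w <> u /\ agree_off j w u /\ forall y, J j x0 w <= J j y w).

Definition incentive (u0 : Base X0) (u : profile X) : profile X -> Base X0 :=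
  fun w => epsilon hX0n (incentive_response u0 u w).

Lemma incentive_at (u0 : Base X0) (u : profile X) : incentive u0 u u = u0.
Proof.
  assert (H : incentive_response u0 u u (incentive u0 u u)).
  { unfold incentive. apply epsilon_spec. exists u0. left; auto. }
  destruct H as [[_ H]|[j [H _]]]; [exact H|contradiction].
Qed.

Lemma incentive_punishes (u0 : Base X0) (u : profile X) (i : 'I_n) (v : Base (X i)) :
  @upd _ _ u i v <> u ->
  forall y, J i (incentive u0 u (@upd _ _ u i v)) (@upd _ _ u i v) <= J i y (@upd _ _ u i v).
Proof.
  intro Hne.
  assert (H : incentive_response u0 u (@upd _ _ u i v) (incentive u0 u (@upd _ _ u i v))).
  { unfold incentive. apply epsilon_spec.
    destruct (payoff_min_spec i (@upd _ _ u i v)) as [[x Hx] Hmin].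
    exists x. right. exists i. split; [exact Hne|split; [apply upd_agree_off|]].
    intro y. rewrite Hx. apply Hmin. }
  destruct H as [[H _]|[j [_ [Hj Hmin]]]]; [contradiction|].
  rewrite <- (agree_off_unique (upd_agree_off u v) Hj Hne) in Hmin. exact Hmin.
Qed.

Lemma B_set_Nash_set (u0 : Base X0) (u : profile X) :
  B_set J u0 u -> Nash_set J (incentive u0 u) u.
Proof.
  intros HB i v.
  destruct (classic (@upd _ _ u i v = u)) as [Heq|Hne]; [rewrite Heq; lra|].
  rewrite incentive_at.
  destruct (payoff_min_spec i (@upd _ _ u i v)) as [[y Hy] _].
  destruct (maxmin_val_spec i u) as [_ Hmax].
  specialize (Hmax v). specialize (HB i).
  pose proof (incentive_punishes u0 Hne y) as Hpun. simpl in *. lra.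
Qed.

End Game.

Theorem lemma3 (n : nat) (X0 : Metric_Space) (X : 'I_n -> Metric_Space)
  (J0 : Base X0 -> profile X -> R) (J : 'I_n -> Base X0 -> profile X -> R)
  (hX0c : compact_space X0) (hX0n : nonempty_space X0)
  (hXc : forall i, compact_space (X i)) (hXn : forall i, nonempty_space (X i))
  (hJ0 : cont_payoff J0) (hJ : forall i, cont_payoff (J i)) :
  (forall (alpha : profile X -> Base X0) (u : profile X),
      Nash_set J alpha u -> B_set J (alpha u) u) /\
  (forall (u0 : Base X0) (u : profile X),
      B_set J u0 u ->
      exists alpha : profile X -> Base X0, alpha u = u0 /\ Nash_set J alpha u).
Proof.
  split.
  - exact (Nash_set_B_set hX0c hX0n hXc hXn hJ).
  - intros u0 u HB. exists (incentive J hX0n u0 u). split.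
    + apply incentive_at.
    + exact (B_set_Nash_set hX0c hX0n hXc hXn hJ HB).
Qed.
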